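(* Let $q(n)$ denote the number of partitions of $n$ into distinct parts, with $q(0)=1$ and $q(n)=0$ for $n<0$, and define $s(n)=q(n)-2q(n-1)+q(n-2)$. Then for every integer $n\ge 6$, $s(n)$ equals the number of partitions of $n$ with parts $q_1\ge q_2\ge\dots\ge q_h$ such that $h\ge 4$, $q_j-q_{j+1}\in\{0,1\}$ for all $1\le j<h$, $q_1=q_2$, and the three smallest parts are $q_{h-2}=3$, $q_{h-1}=2$, $q_h=1$.
   Context: $q(n)$ counts strict partitions (partitions into distinct parts) of $n$. *)

From mathcomp Require Import all_boot all_order all_algebra.
Set Implicit Arguments. Unset Strict Implicit. Unset Printing Implicit Defensive.

Definition is_partition (n : nat) (s : seq nat) : bool :=
  [&& sorted geq s, all (fun x => 0 < x) s & sumn s == n].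

Fixpoint seqs_len (b k : nat) : seq (seq nat) :=
  match k with
  | 0 => [:: [::]]
  | k'.+1 => [seq x :: t | x <- iota 1 b, t <- seqs_len b k']
  end.

Definition seqs_upto (b k : nat) : seq (seq nat) :=
  flatten [seq seqs_len b l | l <- iota 0 k.+1].

(* Every partition of n has at most n parts, each at most n, so this
   counts all partitions of n satisfying P (each exactly once, since
   seqs_upto enumerates without repetition). *)
Definition npart (P : seq nat -> bool) (n : nat) : nat :=
  count (fun s => is_partition n s && P s) (seqs_upto n n).

Definition q (n : nat) : nat := npart (fun s => uniq s) n.

Definition qZ (m : int) : int :=
  match m with Posz k => (q k)%:Z | Negz _ => 0%R end.

Definition s (n : nat) : int :=
  (qZ n%:Z - 2%:Z * qZ (n%:Z - 1) + qZ (n%:Z - 2))%R.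

Definition special (t : seq nat) : bool :=
  [&& 4 <= size t,
      sorted (fun a b => (b <= a) && (a <= b.+1)) t,
      nth 0 t 0 == nth 0 t 1
    & drop (size t - 3) t == [:: 3; 2; 1]].

From mathcomp Require Import all_boot all_order all_algebra.
From mathcomp Require Import zify.
Set Implicit Arguments. Unset Strict Implicit. Unset Printing Implicit Defensive.

(* Let A(n) count the partitions of n into distinct parts whose two largest
   parts are consecutive, and split A(n) = A1(n) + A0(n) according to whether
   the smallest part is 1.  Lowering the largest part by one gives
   q(n) - q(n-1) = A(n); deleting the part 1 gives A1(n) = A0(n-1); lowering
   the two largest parts by one maps the partitions counted by A0(n) whose
   second and third parts are not consecutive onto those counted by A0(n-2).
   Hence s(n) = A(n) - A(n-1) = A0(n) - A0(n-2) counts the distinct partitions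
   of n without a part 1 whose three largest parts are consecutive, and
   conjugation maps these onto the partitions of the statement. *)

Lemma mem_seqs_len b k s :
  (s \in seqs_len b k) = (size s == k) && all (fun x => 0 < x <= b) s.
Proof.
elim: k s => [|k IH] [|x s] //=.
  by apply/negbTE/allpairsPdep => -[? [? [_ _ //]]].
apply/allpairsPdep/idP => [[y [t [Hy Ht [-> ->]]]]|/andP [Hs /andP [Hx Ha]]].
  move: Ht Hy; rewrite IH eqSS mem_iota => /andP [-> ->]; lia.
by exists x, s; rewrite mem_iota IH -eqSS Hs Ha; split => //; lia.
Qed.

Lemma uniq_seqs_len b k : uniq (seqs_len b k).
Proof.
elim: k => [|k IH] //=; apply: allpairs_uniq => //; first exact: iota_uniq.
by move=> [x1 y1] [x2 y2] _ _ /= [-> ->].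
Qed.

Lemma uniq_seqs_upto b k : uniq (seqs_upto b k).
Proof.
rewrite /seqs_upto; elim: k.+1 0 => [|l IH] m //=.
rewrite cat_uniq uniq_seqs_len IH andbT; apply/hasPn => s /flatten_mapP [l' Hl'].
rewrite mem_iota !mem_seqs_len in Hl' * => /andP [/eqP -> _].
by apply/negP => /andP [/eqP]; lia.
Qed.

Lemma size_le_sumn s : all (fun x => 0 < x) s -> size s <= sumn s.
Proof. by elim: s => //= x s IH /andP [Hx /IH]; lia. Qed.

Lemma leq_sumn_mem s x : x \in s -> x <= sumn s.
Proof. by elim: s => //= y s IH; rewrite in_cons => /orP [/eqP ->|/IH]; lia. Qed.

Lemma partition_mem_seqs_upto n s : is_partition n s -> s \in seqs_upto n n.
Proof.
move=> /and3P [_ Hpos /eqP <-]; apply/flatten_mapP; exists (size s).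
  by rewrite mem_iota; have := size_le_sumn Hpos; lia.
rewrite mem_seqs_len eqxx; apply/allP => x Hx.
by have := leq_sumn_mem Hx; move/allP: Hpos => /(_ x Hx); lia.
Qed.

Lemma leq_npart (P Q : seq nat -> bool) n m (f g : seq nat -> seq nat) :
  (forall s, is_partition n s -> P s -> is_partition m (f s) && Q (f s)) ->
  (forall s, is_partition n s -> P s -> g (f s) = s) ->
  npart P n <= npart Q m.
Proof.
move=> Hf Hgf; rewrite /npart -!size_filter -(size_map f).
apply: uniq_leq_size.
  rewrite map_inj_in_uniq ?filter_uniq ?uniq_seqs_upto // => x y.
  rewrite !mem_filter => /andP [/andP [Hx Px] _] /andP [/andP [Hy Py] _] Exy.
  by rewrite -(Hgf _ Hx Px) Exy Hgf.
move=> y /mapP [x]; rewrite mem_filter => /andP [/andP [Hx Px] _] ->.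
have /andP [Hfx Qfx] := Hf _ Hx Px.
by rewrite mem_filter Hfx Qfx partition_mem_seqs_upto.
Qed.

Lemma npart_bij (P Q : seq nat -> bool) n m (f g : seq nat -> seq nat) :
  (forall s, is_partition n s -> P s -> is_partition m (f s) && Q (f s)) ->
  (forall s, is_partition m s -> Q s -> is_partition n (g s) && P (g s)) ->
  (forall s, is_partition n s -> P s -> g (f s) = s) ->
  (forall s, is_partition m s -> Q s -> f (g s) = s) ->
  npart P n = npart Q m.
Proof.
by move=> Hf Hg Hgf Hfg; apply/eqP; rewrite eqn_leq (leq_npart Hf Hgf) (leq_npart Hg Hfg).
Qed.

Lemma npart_split (P R : seq nat -> bool) n :
  npart P n = npart (fun s => P s && R s) n + npart (fun s => P s && ~~ R s) n.
Proof.
rewrite /npart; elim: (seqs_upto n n) => //= s l ->.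
by case: (is_partition n s); case: (P s); case: (R s) => /=; lia.
Qed.

Lemma eq_npart (P Q : seq nat -> bool) n :
  (forall s, is_partition n s -> P s = Q s) -> npart P n = npart Q n.
Proof.
move=> PQ; apply: eq_count => s.
by case Hs: (is_partition n s) => //=; rewrite PQ.
Qed.

Definition is_strict_partition (n : nat) (s : seq nat) : bool :=
  [&& sorted gtn s, all (fun x => 0 < x) s & sumn s == n].

Lemma is_strict_partitionE n s :
  is_strict_partition n s = is_partition n s && uniq s.
Proof.
rewrite /is_strict_partition /is_partition gtn_sorted_uniq_geq.
by case: (uniq s); rewrite ?andbT ?andbF.
Qed.

Lemma npart_uniq_bij (P Q : seq nat -> bool) n m (f g : seq nat -> seq nat) :
  (forall s, is_strict_partition n s -> P s -> is_strict_partition m (f s) && Q (f s)) ->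
  (forall s, is_strict_partition m s -> Q s -> is_strict_partition n (g s) && P (g s)) ->
  (forall s, is_strict_partition n s -> P s -> g (f s) = s) ->
  (forall s, is_strict_partition m s -> Q s -> f (g s) = s) ->
  npart (fun s => uniq s && P s) n = npart (fun s => uniq s && Q s) m.
Proof.
move=> Hf Hg Hgf Hfg.
have strict k s : is_partition k s -> uniq s -> is_strict_partition k s.
  by rewrite is_strict_partitionE => -> ->.
apply: (npart_bij (f := f) (g := g)) => s Hs /andP [Us Ps].
- have /andP [] := Hf s (strict _ _ Hs Us) Ps.
  by rewrite is_strict_partitionE => /andP [-> ->] ->.
- have /andP [] := Hg s (strict _ _ Hs Us) Ps.
  by rewrite is_strict_partitionE => /andP [-> ->] ->.
- exact: Hgf (strict _ _ Hs Us) Ps.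
- exact: Hfg (strict _ _ Hs Us) Ps.
Qed.

Definition qP (P : seq nat -> bool) (n : nat) : nat :=
  npart (fun s => uniq s && P s) n.

Lemma qP_split (P R : seq nat -> bool) n :
  qP P n = qP (fun s => P s && R s) n + qP (fun s => P s && ~~ R s) n.
Proof.
by rewrite /qP (npart_split _ R); congr (_ + _); apply: eq_npart => s _; rewrite andbA.
Qed.

Definition lead_consec (s : seq nat) : bool := nth 0 s 0 == (nth 0 s 1).+1.
Definition second_consec (s : seq nat) : bool := nth 0 s 1 == (nth 0 s 2).+1.
Definition ends_with1 (s : seq nat) : bool := last 0 s == 1.

Definition dec_lead (s : seq nat) : seq nat := if s is x :: r then x.-1 :: r else s.
Definition inc_lead (s : seq nat) : seq nat := if s is x :: r then x.+1 :: r else s.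

Lemma q_lead_consec n : q n.+2 = qP lead_consec n.+2 + q n.+1.
Proof.
have -> : q n.+1 = qP predT n.+1 by apply: eq_npart => s _; rewrite andbT.
rewrite /q (npart_split _ lead_consec); congr (_ + _).
apply: (npart_uniq_bij (f := dec_lead) (g := inc_lead)) => -[|x [|y r]] //;
  rewrite /is_strict_partition /lead_consec /= ?andbT //.
- lia.
- by move=> /and3P [/andP [Hxy ->] /and3P [Hx -> ->] Hn]; lia.
- lia.
- by move=> /and3P [/andP [Hxy ->] /and3P [Hx -> ->] Hn]; lia.
- by move=> /andP [Hx _] _; rewrite prednK.
- by move=> /and3P [_ /andP [Hx _] _] _; rewrite prednK.
Qed.

Definition droplast (s : seq nat) : seq nat := take (size s).-1 s.

Lemma droplast_rcons s x : droplast (rcons s x) = s.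
Proof. by rewrite /droplast size_rcons -cats1 take_size_cat. Qed.

Lemma last_pos x s : 0 < x -> all (fun y => 0 < y) s -> 0 < last x s.
Proof. by elim: s x => //= y s IH x _ /andP [/IH]. Qed.

Lemma qP_ends_with1 n :
  qP (fun s => lead_consec s && ends_with1 s) n.+4 =
  qP (fun s => lead_consec s && ~~ ends_with1 s) n.+3.
Proof.
apply: (npart_uniq_bij (f := droplast) (g := rcons^~ 1)).
- case/lastP => [|[|y [|z t]] x] //; rewrite droplast_rcons;
    rewrite /is_strict_partition /lead_consec /ends_with1 /= ?rcons_path ?last_rcons
      ?all_rcons ?sumn_rcons //=; lia.
- case=> [|y [|z t]];
    rewrite /is_strict_partition /lead_consec /ends_with1 /= ?rcons_path ?last_rcons
      ?all_rcons ?sumn_rcons //=; try lia.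
  by move=> /and3P [Hp /and3P [Hy Hz Ht] Hn] Hl; have := last_pos Hz Ht; lia.
- case/lastP => [|t x] // _ /andP [_].
  by rewrite droplast_rcons /ends_with1 last_rcons => /eqP ->.
- by move=> t _ _; rewrite droplast_rcons.
Qed.

Definition dec_lead2 (s : seq nat) : seq nat :=
  if s is x :: y :: r then x.-1 :: y.-1 :: r else s.
Definition inc_lead2 (s : seq nat) : seq nat :=
  if s is x :: y :: r then x.+1 :: y.+1 :: r else s.

(* The offset is needed: [:: 3; 2] would be sent to [:: 2; 1]. *)
Lemma qP_second_consec n :
  qP (fun s => (lead_consec s && ~~ ends_with1 s) && ~~ second_consec s) n.+4.+2 =
  qP (fun s => lead_consec s && ~~ ends_with1 s) n.+4.
Proof.
apply: (npart_uniq_bij (f := dec_lead2) (g := inc_lead2));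
  case=> [|x [|y [|z r]]]; rewrite /is_strict_partition /lead_consec /second_consec
    /ends_with1 //=; try lia.
all: by move=> /and3P [_ /and3P [Hx Hy _] _] _; rewrite !prednK.
Qed.

Definition conjugate (s : seq nat) : seq nat :=
  [seq count (leq j) s | j <- iota 1 (head 0 s)].

Lemma size_conjugate s : size (conjugate s) = head 0 s.
Proof. by rewrite size_map size_iota. Qed.

Lemma nth_conjugate s i : i < head 0 s -> nth 0 (conjugate s) i = count (leq i.+1) s.
Proof. by move=> Hi; rewrite (nth_map 0) ?size_iota // nth_iota. Qed.

Lemma count_leqS j s : count (leq j) s = count (leq j.+1) s + count (pred1 j) s.
Proof. by elim: s => //= x s ->; case: (ltngtP j x) => /=; lia. Qed.

Lemma nth_conjugateS s i : i.+1 < head 0 s ->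
  nth 0 (conjugate s) i = nth 0 (conjugate s) i.+1 + count (pred1 i.+1) s.
Proof. by move=> Hi; rewrite (nth_conjugate (ltnW Hi)) (nth_conjugate Hi) count_leqS. Qed.

Lemma sorted_conjugate s : sorted geq (conjugate s).
Proof.
apply/(sortedP 0) => i; rewrite size_conjugate => Hi.
by rewrite /= (nth_conjugateS Hi) leq_addr.
Qed.

Lemma nth_le_head s k : sorted geq s -> nth 0 s k <= head 0 s.
Proof.
case: s => [|x s] /=; first by rewrite nth_nil.
move=> /(order_path_min (rev_trans leq_trans)) /allP Hx.
case: k => [|k] //=; case: (ltnP k (size s)) => Hk; first exact: Hx (mem_nth 0 Hk).
by rewrite nth_default.
Qed.

Lemma ltn_count_leq s j k :
  sorted geq s -> 0 < j -> (k < count (leq j) s) = (j <= nth 0 s k).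
Proof.
elim: s k => [|x s IH] k Hs Hj; first by rewrite nth_nil ltn0 leqNgt Hj.
have IH0 := IH 0 (path_sorted Hs) Hj; have /= Hx := nth_le_head 1 Hs.
case: k => [|k] /=; first lia.
by rewrite -IH ?(path_sorted Hs) //; lia.
Qed.

Lemma conjugate_pos s : sorted geq s -> all (fun x => 0 < x) (conjugate s).
Proof.
move=> Hs; apply/allP => y /mapP [j]; rewrite mem_iota => Hj ->.
by rewrite ltn_count_leq ?nth0; lia.
Qed.

Lemma count_iota1_leq a M : count (fun j => j <= a) (iota 1 M) = minn a M.
Proof.
elim: M => [|M IH]; first by rewrite minn0.
by rewrite -[M.+1]addn1 iotaD count_cat IH /=; lia.
Qed.

Lemma sumn_conjugate s : sorted geq s -> sumn (conjugate s) = sumn s.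
Proof.
have count_sum (T : Type) (a : pred T) r : count a r = \sum_(x <- r) a x.
  by rewrite -sumn_count sumnE big_map.
move=> /(nth_le_head ^~ _) Hmax.
rewrite /conjugate sumnE big_map; under eq_bigr do rewrite count_sum.
rewrite exchange_big sumnE big_seq [RHS]big_seq; apply: eq_bigr => x Hx.
rewrite -count_sum count_iota1_leq.
by have := Hmax (index x s); rewrite nth_index //; lia.
Qed.

Lemma head_conjugate s : all (fun x => 0 < x) s -> head 0 (conjugate s) = size s.
Proof.
case: s => [|x s] // Hpos.
rewrite -nth0 nth_conjugate; last by case/andP: Hpos.
by apply/eqP; rewrite -all_count.
Qed.

Lemma conjugateK s :
  sorted geq s -> all (fun x => 0 < x) s -> conjugate (conjugate s) = s.
Proof.
move=> Hs Hpos; have Hsize : size (conjugate (conjugate s)) = size s.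
  by rewrite size_conjugate head_conjugate.
apply: (eq_from_nth (x0 := 0) Hsize) => k; rewrite Hsize => Hk.
rewrite nth_conjugate ?head_conjugate // /conjugate count_map.
rewrite (eq_in_count (a2 := fun j => j <= nth 0 s k)); last first.
  by move=> j; rewrite mem_iota => Hj /=; rewrite ltn_count_leq //; lia.
rewrite count_iota1_leq; have := nth_le_head k Hs.
by move/allP: Hpos => /(_ _ (mem_nth 0 Hk)); lia.
Qed.

Lemma is_partition_conjugate n s :
  is_partition n s -> is_partition n (conjugate s).
Proof.
case/and3P => Hs _ Hn.
by rewrite /is_partition sorted_conjugate conjugate_pos // sumn_conjugate.
Qed.

Lemma sorted_step01_conjugate s :
  uniq s -> sorted (fun a b => (b <= a) && (a <= b.+1)) (conjugate s).
Proof.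
move=> Us; apply/(sortedP 0) => i; rewrite size_conjugate => Hi.
have : count (pred1 i.+1) s <= 1 by rewrite count_uniq_mem // leq_b1.
by rewrite (nth_conjugateS Hi); lia.
Qed.

Lemma last_le_path x s : path geq x s -> all (leq (last x s)) (x :: s).
Proof.
elim: s x => [|y s IH] x /=; first by rewrite leqnn.
by move=> /andP [Hxy /IH /andP [Hy Hs]]; rewrite (leq_trans Hy Hxy) Hy.
Qed.

Lemma drop_conjugate_top3 m r :
  all (fun y => y <= m) r -> drop m (conjugate [:: m.+3, m.+2, m.+1 & r]) = [:: 3; 2; 1].
Proof.
move=> Hr; have r0 k : m < k -> count (leq k) r = 0.
  move=> Hk; apply/eqP; rewrite -leqn0 leqNgt -has_count.
  by apply/hasPn => y /(allP Hr); lia.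
rewrite /conjugate -map_drop drop_iota /= (_ : m.+3 - m = 3); last lia.
rewrite /= add1n !r0 //; last lia.
by congr [:: _; _; _]; lia.
Qed.

Lemma special_conjugate n s :
  is_strict_partition n s -> lead_consec s && ~~ ends_with1 s && second_consec s ->
  special (conjugate s).
Proof.
case/and3P => Hgt Hpos _.
have Hge : sorted geq s by apply: sub_sorted Hgt => a b /ltnW.
have Us : uniq s by move: Hgt; rewrite gtn_sorted_uniq_geq => /andP [].
case: s Hge Hgt Hpos Us => [|x [|y [|z r]]] Hge Hgt Hpos Us;
  rewrite /lead_consec /second_consec /ends_with1 //=; [lia.. |].
move=> /andP [/andP [/eqP Exy Hl] /eqP Eyz].
have /allP Hall := last_le_path Hge.
have Hl2 : 1 < last z r.
  by case/and4P: Hpos => _ _ Hz Hr; have := last_pos Hz Hr; lia.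
have Hz : last z r <= z by apply: Hall; rewrite !inE eqxx !orbT.
have [m Ez] : exists m, z = m.+1 by exists z.-1; lia.
subst x y z.
have Hr : all (fun v => v <= m) r.
  case/and3P: Hgt => _ _ /(order_path_min (rev_trans ltn_trans)) /allP Hr.
  by apply/allP => v /Hr /=; lia.
have no1 : count (pred1 1) [:: m.+3, m.+2, m.+1 & r] = 0.
  by apply/count_memPn/negP => H1; have /= := Hall 1 H1; lia.
rewrite /special size_conjugate; apply/and4P; split.
- by rewrite /=; lia.
- exact: sorted_step01_conjugate.
- by rewrite (nth_conjugateS (i := 0)) // no1 addn0.
- by rewrite !subSS subn0 drop_conjugate_top3.
Qed.

Lemma mem_path_step01 x t :
  path (fun a b => (b <= a) && (a <= b.+1)) x t ->
  forall v, last x t <= v <= x -> v \in x :: t.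
Proof.
elim: t x => [|y t IH] x /=; first by move=> _ v Hv; rewrite inE; apply/eqP; lia.
move=> /andP [Hxy Hp] v Hv; rewrite inE.
case: (ltngtP v x) => [Hvx||->]; rewrite ?eqxx //=; last lia.
by apply: IH => //; lia.
Qed.

Lemma count_special_small u j :
  sorted geq (u ++ [:: 3; 2; 1]) -> 0 < j < 3 -> count (pred1 j) (u ++ [:: 3; 2; 1]) = 1.
Proof.
rewrite (sorted_pairwise (rev_trans leq_trans)) pairwise_cat => /and3P [Hu _ _] Hj.
rewrite count_cat (_ : count _ u = 0); last first.
  by apply/count_memPn/negP => /(allP Hu) /=; lia.
by case: j Hj => [|[|[|j]]].
Qed.

Lemma conjugate_special n t :
  is_partition n t -> special t ->
  is_strict_partition n (conjugate t) &&
  (lead_consec (conjugate t) && ~~ ends_with1 (conjugate t) && second_consec (conjugate t)).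
Proof.
case/and3P => Hge _ /eqP Hn /and4P [_ Hstep /eqP Ht01 /eqP Htail].
have Et : t = take (size t - 3) t ++ [:: 3; 2; 1] by rewrite -Htail cat_take_drop.
have Hcount j : 0 < j < 3 -> count (pred1 j) t = 1.
  by move=> Hj; rewrite Et count_special_small // -Et.
have Hlast : last 0 t = 1 by rewrite Et last_cat.
have HM : 3 <= head 0 t.
  have := nth_le_head (size t - 3) Hge.
  by rewrite -[size t - 3]addn0 -nth_drop Htail.
have Hmem v : 0 < v <= head 0 t -> v \in t.
  move: Hstep Hlast; case: (t) => [|x t'] //= Hstep Hlast Hv.
  by apply: (mem_path_step01 Hstep); lia.
apply/andP; split.
  rewrite /is_strict_partition conjugate_pos // sumn_conjugate // Hn eqxx !andbT.
  apply/(sortedP 0) => i; rewrite size_conjugate => Hi.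
  have : 0 < count (pred1 i.+1) t by rewrite -has_count has_pred1 Hmem //; lia.
  by rewrite (nth_conjugateS Hi) /=; lia.
rewrite /lead_consec /second_consec /ends_with1.
rewrite (nth_conjugateS (i := 0)) ?(nth_conjugateS (i := 1)) ?Hcount //; try lia.
rewrite -nth_last size_conjugate (nth_conjugate (i := (head 0 t).-1)) ?prednK; try lia.
have := ltn_count_leq 1 Hge (ltnW (ltnW HM)); rewrite -Ht01 nth0 leqnn; lia.
Qed.

Lemma qP_special n :
  qP (fun s => lead_consec s && ~~ ends_with1 s && second_consec s) n = npart special n.
Proof.
apply: (npart_bij (f := conjugate) (g := conjugate)).
- move=> s Hs /andP [Us HT]; rewrite is_partition_conjugate //.
  by apply: (@special_conjugate n) HT; rewrite is_strict_partitionE Hs.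
- move=> t Ht Hsp; have /andP [] := conjugate_special Ht Hsp.
  by rewrite is_strict_partitionE => /andP [-> ->] ->.
- by move=> s /and3P [Hs Hpos _] _; rewrite conjugateK.
- by move=> s /and3P [Hs Hpos _] _; rewrite conjugateK.
Qed.

Theorem corollary1p5 (n : nat) : 6 <= n -> s n = Posz (npart special n).
Proof.
case: n => [|[|[|[|[|[|m]]]]]] // _.
rewrite /s /qZ -qP_special.
have -> : (Posz m.+4.+2 - 1 = Posz m.+4.+1)%R by lia.
have -> : (Posz m.+4.+2 - 2 = Posz m.+4)%R by lia.
have := q_lead_consec m.+4; have := q_lead_consec m.+3.
have := qP_split lead_consec ends_with1 m.+4.+2.
have := qP_split lead_consec ends_with1 m.+4.+1.
have := qP_ends_with1 m.+2; have := qP_ends_with1 m.+1.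
have := qP_split (fun s => lead_consec s && ~~ ends_with1 s) second_consec m.+4.+2.
have := qP_second_consec m.
lia.
Qed.
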